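(* Let $A$ be a real $n\times n$ matrix with strictly negative diagonal entries and clique complex $X(G_A)$. Suppose $\det A_\sigma=0$ for every clique $\sigma\in X(G_A)$ with $|\sigma|=2$ or $|\sigma|=3$. Then the sign matrix $\mathcal{E}_A$ is symmetric, and $A_{ii}A_{jj}=A_{ij}A_{ji}$ for every clique $\{i,j\}\in X(G_A)$ with $i\ne j$, and $A_{ii}A_{jj}A_{kk}=A_{ij}A_{jk}A_{ki}$ for every clique $\{i,j,k\}\in X(G_A)$ with $i,j,k$ distinct. (In particular $A_{ij}\neq0$ for every edge $(ij)$ of $G_A$.)
   Context: The sign matrix $\mathcal{E}_A$ has entries equal to the signs ($1,-1,0$) of the entries of $A$. The connectivity graph $G_A$ is the simple graph on $\{1,\dots,n\}$ containing edge $(ij)$, $i\ne j$, unless $A_{ij}=A_{ji}=0$; $X(G_A)$ is the set of its cliques (sets of pairwise adjacent vertices). $A_\sigma$ denotes the principal submatrix of $A$ on index set $\sigma$. *)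

From HB Require Import structures.
From mathcomp Require Import all_boot all_order all_algebra.
Set Implicit Arguments. Unset Strict Implicit. Unset Printing Implicit Defensive.
Import Order.TTheory GRing.Theory Num.Theory.
Local Open Scope ring_scope.

Definition sign_mx (R : realFieldType) (n : nat) (A : 'M[R]_n) : 'M[R]_n :=
  \matrix_(i, j) Num.sg (A i j).

Definition adjA (R : realFieldType) (n : nat) (A : 'M[R]_n) (i j : 'I_n) : bool :=
  (i != j) && ((A i j != 0) || (A j i != 0)).

Definition is_clique (R : realFieldType) (n : nat) (A : 'M[R]_n) (s : {set 'I_n}) : bool :=
  [forall i in s, forall j in s, (i != j) ==> adjA A i j].

(* Principal submatrix A_sigma, indexed by the increasing enumeration of sigma. *)
Definition principal_submx (R : realFieldType) (n : nat) (A : 'M[R]_n) (s : {set 'I_n})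
  : 'M[R]_#|s| :=
  \matrix_(i, j) A (enum_val i) (enum_val j).

From HB Require Import structures.
From mathcomp Require Import all_boot all_order all_algebra ring.
Set Implicit Arguments.
Unset Strict Implicit.
Unset Printing Implicit Defensive.

Import Order.TTheory GRing.Theory Num.Theory.
Local Open Scope ring_scope.

(* On an edge {i, j} the vanishing 2x2 minor says A_ij A_ji = A_ii A_jj > 0, so
   A_ij and A_ji are nonzero of the same sign, while off the edges both entries
   vanish.  On a triangle {i, j, k} the two cyclic products P = A_ij A_jk A_ki
   and Q = A_ik A_kj A_ji satisfy P Q = (A_ii A_jj A_kk)^2 by the edge
   identities, and the vanishing 3x3 minor reduces to P + Q = 2 A_ii A_jj A_kk;
   so P and Q are roots of (X - A_ii A_jj A_kk)^2. *)

Lemma det_mx22 (R : comNzRingType) (M : 'M[R]_2) :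
  \det M = M 0 0 * M 1 1 - M 0 1 * M 1 0.
Proof.
have -> : M = \matrix_(i, j) M (inord i) (inord j).
  by apply/matrixP => i j; rewrite mxE !inord_val.
rewrite (expand_det_row _ 0) !big_ord_recl big_ord0 /cofactor !det_mx11 !mxE /=.
ring.
Qed.

Lemma det_mx33 (R : comNzRingType) (M : 'M[R]_3) :
  \det M = M 0 0 * M 1 1 * M 2 2 + M 0 1 * M 1 2 * M 2 0 + M 0 2 * M 1 0 * M 2 1
         - M 0 0 * M 1 2 * M 2 1 - M 0 1 * M 1 0 * M 2 2 - M 0 2 * M 1 1 * M 2 0.
Proof.
have -> : M = \matrix_(i, j) M (inord i) (inord j).
  by apply/matrixP => i j; rewrite mxE !inord_val.
rewrite (expand_det_row _ 0) !big_ord_recl big_ord0 /cofactor.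
rewrite !(expand_det_row _ 0) !big_ord_recl !big_ord0 /cofactor !det_mx11 !mxE /=.
ring.
Qed.

(* The size of a principal submatrix is only propositionally equal to 2 or 3,
   so the explicit formulas are transported to an arbitrary size [m]. *)
Lemma det_size2 (R : comNzRingType) m (M : 'M[R]_m) : m = 2%N ->
  exists x0 x1 : 'I_m, x0 != x1 /\ \det M = M x0 x0 * M x1 x1 - M x0 x1 * M x1 x0.
Proof. by move=> m2; subst m; exists 0, 1; split=> //; apply: det_mx22. Qed.

Lemma det_size3 (R : comNzRingType) m (M : 'M[R]_m) : m = 3%N ->
  exists x0 x1 x2 : 'I_m, [/\ x0 != x1, x1 != x2, x0 != x2 &
    \det M = M x0 x0 * M x1 x1 * M x2 x2 + M x0 x1 * M x1 x2 * M x2 x0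
           + M x0 x2 * M x1 x0 * M x2 x1 - M x0 x0 * M x1 x2 * M x2 x1
           - M x0 x1 * M x1 x0 * M x2 x2 - M x0 x2 * M x1 x1 * M x2 x0].
Proof. by move=> m3; subst m; exists 0, 1, 2; split=> //; apply: det_mx33. Qed.

Lemma double_root_eq (R : idomainType) (p q d : R) :
  p + q = d + d -> p * q = d * d -> p = d.
Proof.
move=> pq_add pq_mul; apply/eqP; rewrite -subr_eq0 -sqrf_eq0.
have -> : (p - d) ^+ 2 = p * (p + q - (d + d)) + (d * d - p * q) by ring.
by rewrite pq_add pq_mul !subrr mulr0 addr0.
Qed.

Lemma cycle_mul_eq (R : idomainType) (a b c p p' q q' r r' : R) :
  p * p' = a * b -> q * q' = b * c -> r * r' = c * a ->
  a * b * c + p * q * r + r' * p' * q' - a * q * q' - p * p' * c - r' * b * r = 0 ->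
  p * q * r = a * b * c.
Proof.
move=> pp qq rr det0.
have {}det0 : a * b * c + p * q * r + r' * p' * q'
              - a * (q * q') - b * (r * r') - c * (p * p') = 0.
  by rewrite -det0; ring.
rewrite pp qq rr in det0.
apply: (@double_root_eq _ _ (r' * q' * p')).
  by apply/eqP; rewrite -subr_eq0 -det0; apply/eqP; ring.
rewrite (_ : _ * _ = (p * p') * (q * q') * (r * r')); last by ring.
by rewrite pp qq rr; ring.
Qed.

Lemma cards3 (T : finType) (i j k : T) : i != j -> j != k -> i != k ->
  #|[set i; j; k]| = 3%N.
Proof. by move=> ij jk ik; rewrite -setUA cardsU1 cards2 jk !inE negb_or ij ik. Qed.

Lemma sgr_eq_mul_gt0 (R : realDomainType) (x y : R) : 0 < x * y -> Num.sg x = Num.sg y.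
Proof.
case: (ltgtP x 0) => [x_lt0 | x_gt0 | ->]; last by rewrite mul0r ltxx.
  by rewrite nmulr_rgt0 // => y_lt0; rewrite !ltr0_sg.
by rewrite pmulr_rgt0 // => y_gt0; rewrite !gtr0_sg.
Qed.

Section CliqueMinors.

Variables (R : realFieldType) (n : nat) (A : 'M[R]_n).

Lemma adjA_sym i j : adjA A i j = adjA A j i.
Proof. by rewrite /adjA eq_sym orbC. Qed.

Lemma is_cliqueP (s : {set 'I_n}) :
  reflect {in s &, forall i j, i != j -> adjA A i j} (is_clique A s).
Proof.
apply: (iffP forall_inP) => [cl i j /cl/forall_inP/(_ j) ij | cl i si].
  by move=> /ij/implyP.
by apply/forall_inP => j sj; apply/implyP; apply: cl.
Qed.

Lemma is_clique2 i j : i != j -> is_clique A [set i; j] = adjA A i j.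
Proof.
move=> ij; apply/is_cliqueP/idP => [cl | adj x y]; first by apply: cl; rewrite ?set21 ?set22.
by case/set2P=> ->; case/set2P=> ->; rewrite ?eqxx // adjA_sym.
Qed.

Lemma det_principal_submx2 i j : i != j ->
  \det (principal_submx A [set i; j]) = A i i * A j j - A i j * A j i.
Proof.
move=> ij; have card2 : #|[set i; j]| = 2%N by rewrite cards2 ij.
have [x0 [x1 [x01 ->]]] := det_size2 (principal_submx A [set i; j]) card2.
rewrite !mxE; move: x01; rewrite -(inj_eq enum_val_inj).
by case/set2P: (enum_valP x0) => ->; case/set2P: (enum_valP x1) => ->;
  rewrite ?eqxx // => _; ring.
Qed.

Lemma det_principal_submx3 i j k : i != j -> j != k -> i != k ->
  \det (principal_submx A [set i; j; k]) =
    A i i * A j j * A k k + A i j * A j k * A k i + A i k * A j i * A k j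
  - A i i * A j k * A k j - A i j * A j i * A k k - A i k * A j j * A k i.
Proof.
move=> ij jk ik.
have [x0 [x1 [x2 [x01 x12 x02 ->]]]] := det_size3 (principal_submx A _) (cards3 ij jk ik).
have mem3 x : x \in [set i; j; k] -> [\/ x = i, x = j | x = k].
  by rewrite !inE -orbA => /or3P[] /eqP; [apply: Or31 | apply: Or32 | apply: Or33].
rewrite !mxE; move: x01 x12 x02; rewrite -!(inj_eq enum_val_inj).
case/mem3: (enum_valP x0) => ->; case/mem3: (enum_valP x1) => ->;
  case/mem3: (enum_valP x2) => ->; rewrite ?eqxx // => _ _ _; ring.
Qed.

Hypothesis diag_lt0 : forall i, A i i < 0.
Hypothesis det_clique_minor : forall s : {set 'I_n}, is_clique A s ->
  (#|s| == 2)%N || (#|s| == 3)%N -> \det (principal_submx A s) = 0.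

Lemma edge_mul_diag i j : adjA A i j -> A i i * A j j = A i j * A j i.
Proof.
move=> adj; have ij : i != j by case/andP: adj.
apply/eqP; rewrite -subr_eq0 -det_principal_submx2 //; apply/eqP.
by apply: det_clique_minor; rewrite ?is_clique2 ?cards2 ?ij.
Qed.

Lemma triangle_mul_diag i j k : i != j -> j != k -> i != k ->
  is_clique A [set i; j; k] -> A i i * A j j * A k k = A i j * A j k * A k i.
Proof.
move=> ij jk ik cl.
have edge x y : x \in [set i; j; k] -> y \in [set i; j; k] -> x != y ->
    A x y * A y x = A x x * A y y.
  by move=> sx sy xy; rewrite edge_mul_diag //; apply: (is_cliqueP _ cl).
have := det_clique_minor cl; rewrite det_principal_submx3 // cards3 //= => /(_ isT).
move=> det0; symmetry; apply: (cycle_mul_eq _ _ _ det0);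
  by apply: edge; rewrite ?inE ?eqxx ?orbT // eq_sym.
Qed.

Lemma edge_mul_gt0 i j : adjA A i j -> 0 < A i j * A j i.
Proof. by move=> adj; rewrite -edge_mul_diag // nmulr_rgt0. Qed.

Lemma edge_neq0 i j : adjA A i j -> A i j != 0.
Proof. by move/edge_mul_gt0; apply: contraTneq => ->; rewrite mul0r ltxx. Qed.

Lemma sign_mx_sym : (sign_mx A)^T = sign_mx A.
Proof.
apply/matrixP => i j; rewrite !mxE.
have [/edge_mul_gt0/sgr_eq_mul_gt0 // | ] := boolP (adjA A j i).
by rewrite negb_and negbK negb_or !negbK => /orP[/eqP-> | /andP[/eqP-> /eqP->]].
Qed.

End CliqueMinors.

Theorem mainTheorem9 (R : realFieldType) (n : nat) (A : 'M[R]_n)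
  (hdiag : forall i : 'I_n, A i i < 0)
  (hdet : forall s : {set 'I_n}, is_clique A s ->
            (#|s| == 2)%N || (#|s| == 3)%N -> \det (principal_submx A s) = 0) :
  (sign_mx A)^T = sign_mx A /\
  (forall i j : 'I_n, i != j -> is_clique A [set i; j] ->
     A i i * A j j = A i j * A j i) /\
  (forall i j k : 'I_n, i != j -> j != k -> i != k -> is_clique A [set i; j; k] ->
     A i i * A j j * A k k = A i j * A j k * A k i) /\
  (forall i j : 'I_n, adjA A i j -> A i j != 0).
Proof.
split; first exact: sign_mx_sym.
split; first by move=> i j ij; rewrite is_clique2 //; apply: edge_mul_diag.
split; first exact: triangle_mul_diag.
exact: edge_neq0.
Qed.
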